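(* Let $\Gamma$ be a non-abelian torsion-free group and $\rho=(\rho_L,\rho_R):\Gamma\to G\times G$ an admissible representation such that $\rho_L,\rho_R$ are not conjugate in $G$. Let $J\subset\overline\Lambda(\rho)$ be a nonempty $\rho(\Gamma)$-invariant subset. Then $\overline E(J)=\overline E(\rho)$.
   Context: $E=\mathbb R^4$ with a quadratic form $Q$ of signature $(2,2)$ and bilinear form $\langle\cdot|\cdot\rangle$; anti-de Sitter space is $\{Q=-1\}$, $S(E)$ the sphere of rays, $P(E)$ the projective space; $\overline{\mathbb{ADS}}$ is the projection of $\{Q<0\}$ to $P(E)$, identified with $G=\mathrm{PSL}(2,\mathbb R)$, and $\overline{\mathrm{Ein}}_2$ the projection of the null cone $\{Q=0\}$. $G\times G\cong\mathrm{SO}_0(2,2)$ acts projectively ($g\mapsto g_Lgg_R^{-1}$). $\overline\Lambda(\rho)$ is the closure in $P(E)$ of the set of attractive fixed points in $P(E)$ of elements of $\rho(\Gamma)$; it lies in $\overline{\mathrm{Ein}}_2$. It is the projection of $\Lambda(\rho)\cup-\Lambda(\rho)$, where $\Lambda(\rho)\subset S(E)$ is a closed subset (one of the two minimal closed invariant subsets of $S(E)$) projecting injectively onto $\overline\Lambda(\rho)$; thus each $[p]\in\overline\Lambda(\rho)$ has a distinguished representative ray $p\in\Lambda(\rho)$ (take any vector representative of this ray). For $J\subset\overline\Lambda(\rho)$, $\overline E(J)$ is the interior of $\{[x]\in\overline{\mathbb{ADS}}:\ \langle x|p\rangle\langle x|q\rangle>0$ for all $[p],[q]\in J$ with $p,q\in\Lambda(\rho)\}$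 (the sign is independent of the representative $x$), and $\overline E(\rho)=\overline E(\overline\Lambda(\rho))$. Admissible: faithful, discrete image, and lifting to a representation into $\mathrm{Isom}_0(\widetilde{\mathrm{AdS}})=(\widetilde G\times\widetilde G)/\mathcal Z$ preserving a generic closed achronal subset of $\widehat{\mathrm{Ein}}_2$ (the universal cover of the conformal boundary) with at least two points; generic means not containing two points $x,\delta(x)$, $\delta$ the generator of the center of $\widetilde G$, and achronal means no two distinct points are causally related. *)

From Stdlib Require Import Reals ZArith.
Open Scope R_scope.

(* A vector of E is a 2x2 matrix [[m11, m12], [m21, m22]]. *)
Record M2 := mkM2 { m11 : R; m12 : R; m21 : R; m22 : R }.

Definition zeroM : M2 := mkM2 0 0 0 0.
Definition scal (s : R) (A : M2) : M2 :=
  mkM2 (s * m11 A) (s * m12 A) (s * m21 A) (s * m22 A).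
Definition mmul (A B : M2) : M2 :=
  mkM2 (m11 A * m11 B + m12 A * m21 B) (m11 A * m12 B + m12 A * m22 B)
       (m21 A * m11 B + m22 A * m21 B) (m21 A * m12 B + m22 A * m22 B).
Definition det (A : M2) : R := m11 A * m22 A - m12 A * m21 A.
(* adjugate: the inverse of A when det A = 1 *)
Definition adj (A : M2) : M2 := mkM2 (m22 A) (- m12 A) (- m21 A) (m11 A).
Definition trM (A : M2) : M2 := mkM2 (m11 A) (m21 A) (m12 A) (m22 A).
Definition idM : M2 := mkM2 1 0 0 1.

(* The quadratic form Q = - det, of signature (2,2); AdS = {Q = -1} = SL(2,R). *)
Definition Q (x : M2) : R := m12 x * m21 x - m11 x * m22 x.
(* its polar bilinear form <x|y> *)
Definition bil (x y : M2) : R :=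
  (m12 x * m21 y + m21 x * m12 y - m11 x * m22 y - m22 x * m11 y) / 2.

(* Auxiliary Euclidean structure, only used to define the topology. *)
Definition dot (x y : M2) : R :=
  m11 x * m11 y + m12 x * m12 y + m21 x * m21 y + m22 x * m22 y.
(* squared sine of the angle between the lines spanned by nonzero x, y:
   a metric inducing the usual topology of P(E) *)
Definition sin2 (x y : M2) : R := 1 - (dot x y) ^ 2 / (dot x x * dot y y).

(* Elements of G are represented by matrices of determinant 1, modulo sign. *)
Definition psl_eq (A B : M2) : Prop := A = B \/ A = scal (-1) B.
Definition dist2 (A B : M2) : R :=
  (m11 A - m11 B) ^ 2 + (m12 A - m12 B) ^ 2 + (m21 A - m21 B) ^ 2 + (m22 A - m22 B) ^ 2.
Definition distG (A B : M2) : R := Rmin (dist2 A B) (dist2 A (scal (-1) B)).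

(* Projective action of (g_L, g_R) in G x G on E: x |-> g_L x g_R^{-1}. *)
Definition act (A B x : M2) : M2 := mmul (mmul A x) (adj B).

Record is_group (G : Type) (mul : G -> G -> G) (inv : G -> G) (one : G) : Prop := {
  grp_assoc : forall a b c, mul a (mul b c) = mul (mul a b) c;
  grp_id_l : forall a, mul one a = a;
  grp_inv_l : forall a, mul (inv a) a = one }.

Fixpoint gpow {G : Type} (mul : G -> G -> G) (one : G) (g : G) (n : nat) : G :=
  match n with O => one | S k => mul g (gpow mul one g k) end.

Definition non_abelian {G : Type} (mul : G -> G -> G) : Prop :=
  exists g h, mul g h <> mul h g.
Definition torsion_free {G : Type} (mul : G -> G -> G) (one : G) : Prop :=
  forall g n, (1 <= n)%nat -> gpow mul one g n = one -> g = one.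

Definition is_rep {G : Type} (mul : G -> G -> G) (rhoL rhoR : G -> M2) : Prop :=
  (forall g, det (rhoL g) = 1 /\ det (rhoR g) = 1) /\
  (forall g h, psl_eq (rhoL (mul g h)) (mmul (rhoL g) (rhoL h)) /\
               psl_eq (rhoR (mul g h)) (mmul (rhoR g) (rhoR h))).

Definition faithful {G : Type} (one : G) (rhoL rhoR : G -> M2) : Prop :=
  forall g, psl_eq (rhoL g) idM -> psl_eq (rhoR g) idM -> g = one.

Definition discrete_image {G : Type} (rhoL rhoR : G -> M2) : Prop :=
  forall g, exists eps, 0 < eps /\ forall h,
    distG (rhoL h) (rhoL g) + distG (rhoR h) (rhoR g) < eps ->
    psl_eq (rhoL h) (rhoL g) /\ psl_eq (rhoR h) (rhoR g).

Definition conjugate_in_G {G : Type} (rhoL rhoR : G -> M2) : Prop :=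
  exists C, det C = 1 /\ forall g, psl_eq (rhoR g) (mmul (mmul C (rhoL g)) (adj C)).

(* The projective line RP^1 is parametrised by the angle theta (period PI),
   theta |-> line of (cos theta, sin theta).  An element of the universal cover
   of G over A in G is a continuous lift f : R -> R of the projective action of A. *)
Definition lifts (A : M2) (f : R -> R) : Prop :=
  continuity f /\
  forall t, exists l, l <> 0 /\
    m11 A * cos t + m12 A * sin t = l * cos (f t) /\
    m21 A * cos t + m22 A * sin t = l * sin (f t).

(* Ein_2 = projectivised null cone = rank-one matrices u v^T, i.e. RP^1 x RP^1;
   rk1 t p is the rank one matrix e(t) e(p)^T. *)
Definition rk1 (t p : R) : M2 :=
  mkM2 (cos t * cos p) (cos t * sin p) (sin t * cos p) (sin t * sin p).
(* (g_L, g_R) maps u v^T to (g_L u)(g_R^{-T} v)^T, so the universal cover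
   R x R of Ein_2 is acted on by (f_L, f_R) with f_L a lift of g_L and f_R a
   lift of g_R^{-T} = trM (adj g_R).  The centre generator delta of tilde G is
   the translation by PI; Z = <(delta,delta)> (translation by (PI,PI)). *)

Definition Z_invariant (P : R -> R -> Prop) : Prop :=
  forall t p, P t p <-> P (t + PI) (p + PI).
Definition closedR2 (P : R -> R -> Prop) : Prop :=
  forall t p, (forall eps, 0 < eps -> exists t' p', P t' p' /\
      (t - t') ^ 2 + (p - p') ^ 2 < eps) -> P t p.
(* Q restricted to Ein_2 is (a positive multiple of) dt dp; timelike = Q < 0.
   Achronal: no two points are related by a timelike curve. *)
Definition achronal (P : R -> R -> Prop) : Prop :=
  forall t p t' p', P t p -> P t' p' -> 0 <= (t - t') * (p - p').
Definition generic (P : R -> R -> Prop) : Prop :=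
  forall t p, P t p -> ~ P (t + PI) p.
Definition two_points (P : R -> R -> Prop) : Prop :=
  exists t p t' p', P t p /\ P t' p' /\
    ~ (exists n : Z, t' = t + IZR n * PI /\ p' = p + IZR n * PI).

(* (lL, lR) is a lift of rho to a representation into (tilde G x tilde G)/Z
   preserving a generic closed achronal subset of hat Ein_2 with >= 2 points *)
Definition admissible_lift {G : Type} (mul : G -> G -> G) (rhoL rhoR : G -> M2)
  (lL lR : G -> R -> R) : Prop :=
  (forall g, lifts (rhoL g) (lL g)) /\
  (forall g, lifts (trM (adj (rhoR g))) (lR g)) /\
  (forall g h, exists n : Z, forall t,
      lL (mul g h) t = lL g (lL h t) + IZR n * PI /\
      lR (mul g h) t = lR g (lR h t) + IZR n * PI) /\
  exists P : R -> R -> Prop,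
    Z_invariant P /\ closedR2 P /\ achronal P /\ generic P /\ two_points P /\
    forall g t p, P t p -> P (lL g t) (lR g p).

Definition admissible {G : Type} (mul : G -> G -> G) (one : G) (rhoL rhoR : G -> M2) : Prop :=
  faithful one rhoL rhoR /\ discrete_image rhoL rhoR /\
  exists lL lR, admissible_lift mul rhoL rhoR lL lR.

(* The linear action on E (and on the sphere of rays S(E)) of the element of
   SO_0(2,2) determined by the lift: sign s such that s * rho(g) acts on the
   lifted Ein_2 compatibly with (lL g, lR g). *)
Definition hat_sign {G : Type} (rhoL rhoR : G -> M2) (lL lR : G -> R -> R) (g : G) (s : R) : Prop :=
  (s = 1 \/ s = -1) /\
  forall t p, exists l, 0 < l /\
    scal s (act (rhoL g) (rhoR g) (rk1 t p)) = scal l (rk1 (lL g t) (lR g p)).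

Definition attractive_fp (A B y : M2) : Prop :=
  y <> zeroM /\ (exists l, act A B y = scal l y) /\
  exists eps, 0 < eps /\ forall z, z <> zeroM -> sin2 z y < eps ->
    forall d, 0 < d -> exists N, forall n, (N <= n)%nat ->
      sin2 (Nat.iter n (act A B) z) y < d.

(* closure in P(E) of the set of attractive fixed points of elements of rho(Gamma);
   a subset of P(E) is a scale invariant predicate on nonzero vectors *)
Definition Lbar {G : Type} (rhoL rhoR : G -> M2) (x : M2) : Prop :=
  x <> zeroM /\ forall eps, 0 < eps -> exists g y,
    attractive_fp (rhoL g) (rhoR g) y /\ sin2 x y < eps.

(* Lam is a subset of S(E) (positive-scale invariant predicate on nonzero vectors) *)
Definition ray_set (K : M2 -> Prop) : Prop :=
  (forall x, K x -> x <> zeroM) /\ (forall x l, 0 < l -> K x -> K (scal l x)).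
Definition ray_closed (K : M2 -> Prop) : Prop :=
  forall x, x <> zeroM ->
    (forall eps, 0 < eps -> exists y, K y /\ 0 < dot x y /\ sin2 x y < eps) -> K x.
Definition hat_invariant {G : Type} (rhoL rhoR : G -> M2) (lL lR : G -> R -> R)
  (K : M2 -> Prop) : Prop :=
  forall g s x, hat_sign rhoL rhoR lL lR g s -> K x -> K (scal s (act (rhoL g) (rhoR g) x)).

(* Lam is a minimal nonempty closed invariant subset of S(E) projecting
   injectively onto Lbar *)
Definition is_Lambda {G : Type} (rhoL rhoR : G -> M2) (lL lR : G -> R -> R)
  (Lam : M2 -> Prop) : Prop :=
  ray_set Lam /\ ray_closed Lam /\ (exists x, Lam x) /\ hat_invariant rhoL rhoR lL lR Lam /\
  (forall K : M2 -> Prop, ray_set K -> ray_closed K -> (exists x, K x) ->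
     hat_invariant rhoL rhoR lL lR K -> (forall x, K x -> Lam x) ->
     forall x, Lam x -> K x) /\
  (forall x, x <> zeroM -> (Lbar rhoL rhoR x <-> Lam x \/ Lam (scal (-1) x))) /\
  (forall x, ~ (Lam x /\ Lam (scal (-1) x))).

Definition E_pre (Lam J : M2 -> Prop) (x : M2) : Prop :=
  Q x < 0 /\ forall p q, Lam p -> Lam q -> J p -> J q -> 0 < bil x p * bil x q.
Definition Ebar (Lam J : M2 -> Prop) (x : M2) : Prop :=
  x <> zeroM /\ exists eps, 0 < eps /\
    forall y, y <> zeroM -> sin2 x y < eps -> E_pre Lam J y.

Definition proj_set (J : M2 -> Prop) : Prop :=
  (forall x, J x -> x <> zeroM) /\ (forall x l, l <> 0 -> J x -> J (scal l x)).

(* Pick p0 in Lambda with [p0] in J, and a neighbourhood U of x all of whose points satisfy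
   the condition defining E(J).  As J is invariant, <z|g p0><z|p0> > 0 for every z in U
   and every g.  The points p of Lambda whose whole orbit satisfies the closed condition
   <z|g p><z|p0> >= 0 on U form a closed, invariant, nonempty subset of Lambda, hence all
   of Lambda by minimality.  Openness of U makes the inequality strict: if <y|p> = 0, a
   small perturbation of y inside U flips the sign of <.|p> but not of <.|p0>.  So every
   <y|p>, p in Lambda, has the sign of <y|p0>, which is the condition defining E(rho). *)

From Stdlib Require Import Reals ZArith Lra List.
(* Imported after Reals so that [sin2] is the one of Defs, not Stdlib's trigonometric one. *)
From Pilot Require Import Defs.
Open Scope R_scope.

Definition addM (A B : M2) : M2 :=
  mkM2 (m11 A + m11 B) (m12 A + m12 B) (m21 A + m21 B) (m22 A + m22 B).

Lemma act_scal A B l p : act A B (scal l p) = scal l (act A B p).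
Proof. destruct A, B, p; unfold act, mmul, adj, scal; simpl; f_equal; ring. Qed.

Lemma scal_comm s l p : scal s (scal l p) = scal l (scal s p).
Proof. destruct p; unfold scal; simpl; f_equal; ring. Qed.

Lemma bil_scal_l l w p : bil (scal l w) p = l * bil w p.
Proof. destruct w, p; unfold bil, scal; simpl; field. Qed.

Lemma bil_scal_r w l p : bil w (scal l p) = l * bil w p.
Proof. destruct w, p; unfold bil, scal; simpl; field. Qed.

Lemma bil_addM_l y v p : bil (addM y v) p = bil y p + bil v p.
Proof. destruct y, v, p; unfold bil, addM; simpl; field. Qed.

Lemma bil_zeroM_l p : bil zeroM p = 0.
Proof. destruct p; unfold bil, zeroM; simpl; field. Qed.

(* Since <x|y> = -tr(x adj y)/2, the adjoint of x |-> A x adj B is x |-> adj A x B. *)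
Lemma bil_act A B w p : bil w (act A B p) = bil (act (adj A) (adj B) w) p.
Proof. destruct A, B, w, p; unfold bil, act, mmul, adj; simpl; field. Qed.

Definition bil_dual (w : M2) : M2 :=
  mkM2 (- m22 w / 2) (m21 w / 2) (m12 w / 2) (- m11 w / 2).

Lemma bil_dot w p : bil w p = dot (bil_dual w) p.
Proof. destruct w, p; unfold bil, dot, bil_dual; simpl; field. Qed.

Lemma dot_scal_r w a p : dot w (scal a p) = a * dot w p.
Proof. destruct w, p; unfold dot, scal; simpl; ring. Qed.

Lemma dot_addM_r w p q : dot w (addM p q) = dot w p + dot w q.
Proof. destruct w, p, q; unfold dot, addM; simpl; ring. Qed.

Lemma dot_zeroM_r w : dot w zeroM = 0.
Proof. destruct w; unfold dot, zeroM; simpl; ring. Qed.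

Lemma dot_self_nonneg x : 0 <= dot x x.
Proof. destruct x; unfold dot; simpl; nra. Qed.

Lemma dot_self_pos x : x <> zeroM -> 0 < dot x x.
Proof.
  intros Hx; destruct (dot_self_nonneg x) as [|H0]; [assumption|].
  exfalso; apply Hx; destruct x as [a b c d]; unfold dot in H0; simpl in H0.
  unfold zeroM; f_equal; apply Rsqr_0_uniq; unfold Rsqr; nra.
Qed.

Lemma bil_nondegenerate p : p <> zeroM -> exists v, bil v p <> 0.
Proof.
  intros Hp; exists (mkM2 (-2 * m22 p) (2 * m21 p) (2 * m12 p) (-2 * m11 p)).
  replace (bil _ p) with (dot p p); [apply Rgt_not_eq, dot_self_pos; exact Hp|].
  destruct p; unfold bil, dot; simpl; field.
Qed.

Lemma dot_cauchy_schwarz a b : (dot a b) ^ 2 <= dot a a * dot b b.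
Proof.
  destruct a as [a1 a2 a3 a4], b as [b1 b2 b3 b4]; unfold dot; simpl.
  assert (Lagrange : (a1 * a1 + a2 * a2 + a3 * a3 + a4 * a4) * (b1 * b1 + b2 * b2 + b3 * b3 + b4 * b4)
   - (a1 * b1 + a2 * b2 + a3 * b3 + a4 * b4) ^ 2 =
   (a1*b2-a2*b1)^2 + (a1*b3-a3*b1)^2 + (a1*b4-a4*b1)^2 + (a2*b3-a3*b2)^2
   + (a2*b4-a4*b2)^2 + (a3*b4-a4*b3)^2) by ring.
  pose proof (pow2_ge_0 (a1*b2-a2*b1)); pose proof (pow2_ge_0 (a1*b3-a3*b1));
  pose proof (pow2_ge_0 (a1*b4-a4*b1)); pose proof (pow2_ge_0 (a2*b3-a3*b2));
  pose proof (pow2_ge_0 (a2*b4-a4*b2)); pose proof (pow2_ge_0 (a3*b4-a4*b3)).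
  lra.
Qed.

(* Rescaling y so that <x, y'> = |x|^2, the distance |y' - x|^2 is |x|^2 tan^2 of the angle. *)
Lemma dot_rescale_sub x y : x <> zeroM -> y <> zeroM -> dot x y <> 0 ->
  let v := addM (scal (dot x x / dot x y) y) (scal (-1) x) in
  dot v v * (1 - sin2 x y) = dot x x * sin2 x y.
Proof.
  intros Hx Hy Hd; cbv zeta.
  pose proof (dot_self_pos x Hx); pose proof (dot_self_pos y Hy).
  unfold sin2; revert Hd H H0; destruct x, y; unfold dot, addM, scal; simpl.
  intros; field; lra.
Qed.

Lemma dot_nonneg_ray_closed w x : x <> zeroM ->
  (forall eps, 0 < eps -> exists y, 0 <= dot w y /\ 0 < dot x y /\ sin2 x y < eps) ->
  0 <= dot w x.
Proof.
  intros Hx Hlim; apply Rnot_lt_le; intros Hneg.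
  set (k := - dot w x); set (nx := dot x x); set (W := dot w w).
  assert (Hnx : 0 < nx) by exact (dot_self_pos x Hx).
  assert (HW : 0 <= W) by apply dot_self_nonneg.
  assert (Hk2 : 0 < k ^ 2) by (apply pow_lt; unfold k; lra).
  destruct (Hlim (Rmin (1/2) (k ^ 2 / (2 * (W + 1) * nx)))) as (y & Hwy & Hxy & Hs).
  { apply Rmin_pos; [lra|]; apply Rdiv_lt_0_compat; nra. }
  pose proof (Rmin_l (1/2) (k ^ 2 / (2 * (W + 1) * nx))) as Hs1.
  pose proof (Rmin_r (1/2) (k ^ 2 / (2 * (W + 1) * nx))) as Hs2.
  set (s := sin2 x y) in *.
  assert (Hy : y <> zeroM) by (intros ->; rewrite dot_zeroM_r in Hxy; lra).
  pose proof (dot_rescale_sub x y Hx Hy (Rgt_not_eq _ _ Hxy)) as Hvv.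
  cbv zeta in Hvv; fold nx s in Hvv.
  set (v := addM (scal (nx / dot x y) y) (scal (-1) x)) in Hvv.
  assert (Hwv : k <= dot w v).
  { unfold v; rewrite dot_addM_r, !dot_scal_r; unfold k.
    assert (0 <= nx / dot x y * dot w y) by (apply Rmult_le_pos; [apply Rlt_le, Rdiv_lt_0_compat|]; lra).
    lra. }
  assert (Hcs := dot_cauchy_schwarz w v); fold W in Hcs.
  assert (Hv0 := dot_self_nonneg v).
  assert (Hs0 : 0 <= s) by nra.
  assert (Hsmall : s * (2 * (W + 1) * nx) < k ^ 2).
  { apply Rlt_le_trans with (k ^ 2 / (2 * (W + 1) * nx) * (2 * (W + 1) * nx)).
    - apply Rmult_lt_compat_r; nra.
    - right; field; lra. }
  assert (Hv : dot v v <= 2 * nx * s) by nra.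
  assert (Hkv : k ^ 2 <= dot w v ^ 2) by (unfold k in *; nra).
  assert (W * dot v v <= W * (2 * nx * s)) by (apply Rmult_le_compat_l; assumption).
  nra.
Qed.

Lemma bil_nonneg_ray_closed w x : x <> zeroM ->
  (forall eps, 0 < eps -> exists y, 0 <= bil w y /\ 0 < dot x y /\ sin2 x y < eps) ->
  0 <= bil w x.
Proof.
  intros Hx Hlim; rewrite bil_dot; apply dot_nonneg_ray_closed; [exact Hx|].
  intros eps Heps; destruct (Hlim eps Heps) as (y & Hy); exists y; rewrite <- bil_dot; exact Hy.
Qed.

Lemma sin2_addM_scal x y v t : sin2 x (addM y (scal t v)) =
  1 - (dot x y + t * dot x v) ^ 2 / (dot x x * (dot y y + 2 * t * dot y v + t * t * dot v v)).
Proof.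
  unfold sin2; f_equal; f_equal; f_equal;
    destruct x, y, v; unfold dot, addM, scal; simpl; ring.
Qed.

Lemma sin2_ball_perturb x y v eps : x <> zeroM -> y <> zeroM -> sin2 x y < eps ->
  exists tau, 0 < tau /\ forall t, Rabs t < tau -> sin2 x (addM y (scal t v)) < eps.
Proof.
  intros Hx Hy Hs.
  set (f := fun t => 1 - (dot x y + t * dot x v) ^ 2 /
                         (dot x x * (dot y y + 2 * t * dot y v + t * t * dot v v))).
  assert (Hf0 : f 0 = sin2 x y).
  { unfold f, sin2; repeat f_equal; ring. }
  assert (Hcont : continuity_pt f 0).
  { unfold f; reg.
    pose proof (dot_self_pos x Hx); pose proof (dot_self_pos y Hy); nra. }
  destruct (Hcont (eps - sin2 x y)) as (alp & Halp & Hnear); [lra|].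
  exists alp; split; [exact Halp|]; intros t Ht.
  rewrite sin2_addM_scal; fold (f t).
  destruct (Req_dec t 0) as [->|Ht0]; [lra|].
  assert (Hd : R_dist (f t) (f 0) < eps - sin2 x y).
  { apply Hnear; split; [split; [exact I|auto]|].
    simpl; unfold R_dist; rewrite Rminus_0_r; exact Ht. }
  unfold R_dist in Hd; pose proof (Rle_abs (f t - f 0)); lra.
Qed.

(* Of t and -t, one flips the sign: the two products multiply to -t^2 b^2 (c^2 - t^2 e^2). *)
Lemma sign_flip_nearby b c e tau : b <> 0 -> c <> 0 -> 0 < tau ->
  exists t, Rabs t < tau /\ t * b * (c + t * e) < 0.
Proof.
  intros Hb Hc Htau.
  set (u := Rmin (tau / 2) (Rabs c / (Rabs e + 1))).
  pose proof (Rabs_pos e); pose proof (Rabs_pos_lt c Hc).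
  assert (Hu : 0 < u) by (apply Rmin_pos; [lra|apply Rdiv_lt_0_compat; lra]).
  assert (Hut : u < tau) by (unfold u; pose proof (Rmin_l (tau / 2) (Rabs c / (Rabs e + 1))); lra).
  assert (Hue : u * Rabs e < Rabs c).
  { assert (Hue1 : u * (Rabs e + 1) <= Rabs c).
    { apply Rle_trans with (Rabs c / (Rabs e + 1) * (Rabs e + 1)).
      - apply Rmult_le_compat_r; [lra|apply Rmin_r].
      - right; field; lra. }
    lra. }
  assert (Hsq : (u * e) ^ 2 < c ^ 2).
  { rewrite <- (pow2_abs c), <- (pow2_abs (u * e)), Rabs_mult, (Rabs_right u) by lra.
    assert (0 <= u * Rabs e) by (apply Rmult_le_pos; lra).
    nra. }
  assert (Hb2 : 0 < b ^ 2) by (rewrite <- Rsqr_pow2; apply Rsqr_pos_lt; exact Hb).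
  destruct (Rlt_or_le (u * b * (c + u * e)) 0) as [Hneg|Hpos].
  - exists u; rewrite Rabs_right by lra; auto.
  - exists (- u); rewrite Rabs_Ropp, Rabs_right by lra; split; [exact Hut|].
    assert (Hprod : (u * b * (c + u * e)) * (- u * b * (c + - u * e)) < 0).
    { replace (_ * _) with (- (u ^ 2 * b ^ 2) * (c ^ 2 - (u * e) ^ 2)) by ring.
      assert (0 < u ^ 2 * b ^ 2) by (apply Rmult_lt_0_compat; [apply pow_lt|]; lra).
      nra. }
    nra.
Qed.

Lemma bil_product_pos_in_ball x y p p0 eps :
  x <> zeroM -> y <> zeroM -> sin2 x y < eps -> p <> zeroM -> bil y p0 <> 0 ->
  (forall z, z <> zeroM -> sin2 x z < eps -> 0 <= bil z p * bil z p0) ->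
  0 < bil y p * bil y p0.
Proof.
  intros Hx Hy Hs Hp Hc Hnn.
  destruct (Rle_lt_or_eq_dec _ _ (Hnn y Hy Hs)) as [Hpos|Hzero]; [exact Hpos|exfalso].
  assert (Hyp : bil y p = 0).
  { destruct (Rmult_integral _ _ (eq_sym Hzero)); [assumption|contradiction]. }
  destruct (bil_nondegenerate p Hp) as [v Hv].
  destruct (sin2_ball_perturb x y v eps Hx Hy Hs) as (tau & Htau & Hball).
  destruct (sign_flip_nearby (bil v p) (bil y p0) (bil v p0) tau Hv Hc Htau) as (t & Ht & Hneg).
  set (z := addM y (scal t v)).
  assert (Hz : bil z p * bil z p0 = t * bil v p * (bil y p0 + t * bil v p0)).
  { unfold z; rewrite !bil_addM_l, !bil_scal_l, Hyp; ring. }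
  assert (Hz0 : z <> zeroM) by (intros Hz0; rewrite Hz0, !bil_zeroM_l in Hz; lra).
  pose proof (Hnn z Hz0 (Hball t Ht)); lra.
Qed.

Section Words.

Variables (Gam : Type) (rhoL rhoR : Gam -> M2) (lL lR : Gam -> R -> R).

Definition word_act (l : list (Gam * R)) (p : M2) : M2 :=
  fold_right (fun gs v => scal (snd gs) (act (rhoL (fst gs)) (rhoR (fst gs)) v)) p l.

Definition hat_word (l : list (Gam * R)) : Prop :=
  Forall (fun gs => hat_sign rhoL rhoR lL lR (fst gs) (snd gs)) l.

Lemma word_act_scal l c p : word_act l (scal c p) = scal c (word_act l p).
Proof.
  induction l as [|[g s] l IH]; simpl; [reflexivity|].
  rewrite IH, act_scal, scal_comm; reflexivity.
Qed.

Lemma word_act_snoc l g s p :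
  word_act (l ++ (g, s) :: nil) p = word_act l (scal s (act (rhoL g) (rhoR g) p)).
Proof. unfold word_act; rewrite fold_right_app; reflexivity. Qed.

Lemma bil_word_act_adjoint l w : exists w', forall p, bil w (word_act l p) = bil w' p.
Proof.
  revert w; induction l as [|[g s] l IH]; intros w; simpl; [exists w; reflexivity|].
  destruct (IH (scal s (act (adj (rhoL g)) (adj (rhoR g)) w))) as [w' Hw'].
  exists w'; intros p; rewrite <- Hw', bil_scal_r, bil_act, bil_scal_l; reflexivity.
Qed.

Lemma hat_invariant_word K l p :
  hat_invariant rhoL rhoR lL lR K -> hat_word l -> K p -> K (word_act l p).
Proof.
  intros Hinv Hl Kp; induction Hl as [|[g s] l Hgs Hl IH]; simpl; [exact Kp|].
  exact (Hinv g s _ Hgs IH).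
Qed.

Lemma proj_set_hat_invariant J : proj_set J ->
  (forall g x, J x -> J (act (rhoL g) (rhoR g) x)) -> hat_invariant rhoL rhoR lL lR J.
Proof.
  intros [_ HJscal] HJinv g s x [Hs _] Jx.
  apply HJscal; [destruct Hs; lra|]; apply HJinv; exact Jx.
Qed.

Variable Lam : M2 -> Prop.
Hypothesis Lam_ray : ray_set Lam.
Hypothesis Lam_closed : ray_closed Lam.
Hypothesis Lam_inv : hat_invariant rhoL rhoR lL lR Lam.
Hypothesis Lam_minimal : forall K : M2 -> Prop, ray_set K -> ray_closed K ->
  (exists x, K x) -> hat_invariant rhoL rhoR lL lR K -> (forall x, K x -> Lam x) ->
  forall x, Lam x -> K x.

Lemma Lambda_sub_cone (S : M2 -> Prop) p0 : Lam p0 ->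
  (forall l, hat_word l -> forall w, S w -> 0 <= bil w (word_act l p0)) ->
  forall p w, Lam p -> S w -> 0 <= bil w p.
Proof.
  intros Lp0 Horbit.
  set (K := fun p => Lam p /\ forall l, hat_word l -> forall w, S w -> 0 <= bil w (word_act l p)).
  assert (HK : forall p, Lam p -> K p).
  { apply Lam_minimal.
    - split; [intros p [Lp _]; exact (proj1 Lam_ray p Lp)|].
      intros p c Hc [Lp Hp]; split; [exact (proj2 Lam_ray p c Hc Lp)|].
      intros l Hl w Sw; rewrite word_act_scal, bil_scal_r.
      apply Rmult_le_pos; [lra|exact (Hp l Hl w Sw)].
    - intros p Hp Hlim; split.
      + apply Lam_closed; [exact Hp|]; intros eps Heps.
        destruct (Hlim eps Heps) as (y & [Ly _] & Hy); exists y; auto.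
      + intros l Hl w Sw; destruct (bil_word_act_adjoint l w) as [w' Hw'].
        rewrite Hw'; apply bil_nonneg_ray_closed; [exact Hp|]; intros eps Heps.
        destruct (Hlim eps Heps) as (y & [_ Ky] & Hy); exists y.
        rewrite <- Hw'; auto.
    - exists p0; split; assumption.
    - intros g s p Hgs [Lp Hp]; split; [exact (Lam_inv g s p Hgs Lp)|].
      intros l Hl w Sw; rewrite <- word_act_snoc.
      apply Hp; [apply Forall_app; split; [exact Hl|constructor; auto]|exact Sw].
    - intros p [Lp _]; exact Lp. }
  intros p w Lp Sw; exact (proj2 (HK p Lp) nil (Forall_nil _) w Sw).
Qed.

Lemma Ebar_all_Lambda J : hat_invariant rhoL rhoR lL lR J -> (exists p0, J p0 /\ Lam p0) ->
  forall x, Ebar Lam J x -> Ebar Lam (fun _ => True) x.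
Proof.
  intros HJinv [p0 [Jp0 Lp0]] x [Hx (eps & Heps & HU)].
  split; [exact Hx|]; exists eps; split; [exact Heps|].
  assert (Hnonneg : forall p z, Lam p -> z <> zeroM -> sin2 x z < eps ->
            0 <= bil z p * bil z p0).
  { intros p z Lp Hz Hs; rewrite Rmult_comm, <- bil_scal_l.
    apply (Lambda_sub_cone
             (fun w => exists z, z <> zeroM /\ sin2 x z < eps /\ w = scal (bil z p0) z) p0);
      [exact Lp0| |exact Lp|eauto].
    intros l Hl w (z' & Hz' & Hs' & ->); rewrite bil_scal_l, Rmult_comm.
    apply Rlt_le, (proj2 (HU z' Hz' Hs')); try assumption;
      [apply (hat_invariant_word Lam)|apply (hat_invariant_word J)]; assumption. }
  intros y Hy Hs; destruct (HU y Hy Hs) as [HQ HP]; split; [exact HQ|].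
  intros p q Lp Lq _ _.
  assert (Hc : bil y p0 <> 0).
  { intros Hc; pose proof (HP p0 p0 Lp0 Lp0 Jp0 Jp0) as Hp0; rewrite Hc in Hp0; lra. }
  assert (Hsign : forall r, Lam r -> 0 < bil y r * bil y p0).
  { intros r Lr; apply (bil_product_pos_in_ball x y r p0 eps); auto.
    exact (proj1 Lam_ray r Lr). }
  pose proof (Hsign p Lp); pose proof (Hsign q Lq).
  assert (0 < bil y p0 * bil y p0) by (apply Rsqr_pos_lt; exact Hc).
  nra.
Qed.

End Words.

Lemma Ebar_antimono (Lam J1 J2 : M2 -> Prop) :
  (forall p, Lam p -> J2 p -> J1 p) -> forall x, Ebar Lam J1 x -> Ebar Lam J2 x.
Proof.
  intros Hsub x [Hx (eps & Heps & HU)]; split; [exact Hx|]; exists eps; split; [exact Heps|].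
  intros y Hy Hs; destruct (HU y Hy Hs) as [HQ HP]; split; [exact HQ|].
  intros p q Lp Lq Jp Jq; apply HP; auto.
Qed.

Lemma proj_set_meets_Lambda {Gam : Type} (rhoL rhoR : Gam -> M2) (Lam J : M2 -> Prop) :
  (forall x, x <> zeroM -> (Lbar rhoL rhoR x <-> Lam x \/ Lam (scal (-1) x))) ->
  proj_set J -> (forall x, J x -> Lbar rhoL rhoR x) -> (exists x, J x) ->
  exists p0, J p0 /\ Lam p0.
Proof.
  intros HLbar [HJ0 HJscal] HJsub [x Jx].
  destruct (proj1 (HLbar x (HJ0 x Jx)) (HJsub x Jx)) as [Lx|Lx].
  - exists x; auto.
  - exists (scal (-1) x); split; [apply HJscal; [lra|exact Jx]|exact Lx].
Qed.

Theorem mainTheorem8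
  (Gam : Type) (mul : Gam -> Gam -> Gam) (inv : Gam -> Gam) (one : Gam)
  (Hgrp : is_group Gam mul inv one) (Hna : non_abelian mul) (Htf : torsion_free mul one)
  (rhoL rhoR : Gam -> M2) (Hrep : is_rep mul rhoL rhoR)
  (Hfaith : faithful one rhoL rhoR) (Hdisc : discrete_image rhoL rhoR)
  (lL lR : Gam -> R -> R) (Hlift : admissible_lift mul rhoL rhoR lL lR)
  (Hnc : ~ conjugate_in_G rhoL rhoR)
  (Lam : M2 -> Prop) (HLam : is_Lambda rhoL rhoR lL lR Lam)
  (J : M2 -> Prop) (HJ : proj_set J)
  (HJsub : forall x, J x -> Lbar rhoL rhoR x)
  (HJne : exists x, J x)
  (HJinv : forall g x, J x -> J (act (rhoL g) (rhoR g) x)) :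
  forall x, x <> zeroM -> (Ebar Lam J x <-> Ebar Lam (Lbar rhoL rhoR) x).
Proof.
  intros x _.
  destruct HLam as (Hray & Hclosed & _ & Hinv & Hmin & HLbar & _).
  split.
  - intros HE; apply (Ebar_antimono Lam (fun _ => True)); [auto|].
    apply (Ebar_all_Lambda Gam rhoL rhoR lL lR Lam Hray Hclosed Hinv Hmin J);
      [apply proj_set_hat_invariant; assumption
      |apply (proj_set_meets_Lambda rhoL rhoR); assumption
      |exact HE].
  - apply Ebar_antimono; intros p _ Jp; exact (HJsub p Jp).
Qed.
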